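(* Let $\mathbf{s}$ be an automatic sequence for which there is a constant $c$ such that every prefix of $\mathbf{s}$ has a string attractor of size at most $c$. Then the functions $f(n):=\mathrm{maxspan}(\mathbf{s}[0..n-1])$ and $g(n):=\mathrm{minspan}(\mathbf{s}[0..n-1])$ are synchronized: there is a finite automaton recognizing the (parallel, padded) representations of the pairs $(n,f(n))$, and one recognizing the representations of the pairs $(n,g(n))$, in the numeration system of $\mathbf{s}$.
   Context: A numeration system represents each natural number uniquely as a word over a finite alphabet; it is regular if the set of representations is regular and the relation $z=x+y$ is recognizable by a finite automaton reading representations in parallel. A sequence $\mathbf{s}=(s_n)_{n\ge0}$ is automatic if there is a regular numeration system and a finite automaton that on input the representation of $n$ outputs $s_n$. A string attractor of a finite word $w=w[0..n-1]$ is a set $S\subseteq\{0,\ldots,n-1\}$ such that every nonempty factor of $w$ has an occurrence $w[p..q]$ with $p\le i\le q$ for some $i\in S$. The span of a finite set $S=\{i_1<\cdots<i_k\}$ is $i_k-i_1$. For a finite word $x$, $\mathrm{maxspan}(x)$ and $\mathrm{minspan}(x)$ are the maximum and minimum span among all string attractors of $x$ of minimum cardinality. *)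

From mathcomp Require Import all_boot.
Set Implicit Arguments. Unset Strict Implicit. Unset Printing Implicit Defensive.

Definition regular (A : finType) (L : seq A -> Prop) : Prop :=
  exists (Q : finType) (q0 : Q) (d : Q -> A -> Q) (F : {set Q}),
    forall w : seq A, foldl d q0 w \in F <-> L w.

Definition lpad (T : Type) (x : T) (m : nat) (w : seq T) : seq T :=
  nseq (m - size w) x ++ w.

(* Words are padded on the left (most significant end) with a fresh padding
   symbol [None] to a common length and read in parallel. *)
Definition pad2 (S : Type) (u v : seq S) : seq (option S * option S) :=
  let m := maxn (size u) (size v) in
  zip (lpad None m (map Some u)) (lpad None m (map Some v)).

Definition pad3 (S : Type) (u v w : seq S)
  : seq (option S * option S * option S) :=
  let m := maxn (size u) (maxn (size v) (size w)) in
  zip (zip (lpad None m (map Some u)) (lpad None m (map Some v)))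
      (lpad None m (map Some w)).

Definition numeration_system (Sigma : finType) (rep : nat -> seq Sigma) : Prop :=
  injective rep.

Definition regular_numeration_system (Sigma : finType) (rep : nat -> seq Sigma)
  : Prop :=
  [/\ numeration_system rep,
      regular (fun w : seq Sigma => exists n, w = rep n)
    & regular (fun t => exists x y z, t = pad3 (rep x) (rep y) (rep z)
                                       /\ z = x + y)].

Definition automatic_wrt (Sigma Delta : finType) (rep : nat -> seq Sigma)
  (s : nat -> Delta) : Prop :=
  exists (Q : finType) (q0 : Q) (d : Q -> Sigma -> Q) (out : Q -> Delta),
    forall n, s n = out (foldl d q0 (rep n)).

Definition synchronized (Sigma : finType) (rep : nat -> seq Sigma)
  (f : nat -> nat) : Prop :=
  regular (fun t => exists n, t = pad2 (rep n) (rep (f n))).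

(* the factor w[p..q] (inclusive) *)
Definition factor (T : Type) (w : seq T) (p q : nat) : seq T :=
  take (q - p).+1 (drop p w).

Definition attractor (T : eqType) (w : seq T) (S : {set 'I_(size w)}) : bool :=
  [forall p : 'I_(size w), forall q : 'I_(size w), (p <= q) ==>
    [exists p' : 'I_(size w), exists q' : 'I_(size w),
      [&& p' <= q', factor w p' q' == factor w p q &
          [exists i in S, (p' <= i) && (i <= q')]]]].
Arguments attractor {T} w S.

(* span of a finite set of positions: max - min (0 for the empty set) *)
Definition span (n : nat) (S : {set 'I_n}) : nat :=
  (\max_(i in S) val i) - \big[minn/n]_(i in S) val i.

(* minimum cardinality of a string attractor of w (the full set of positions
   is always an attractor, so the default value size w is harmless) *)
Definition min_attr_card (T : eqType) (w : seq T) : nat :=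
  \big[minn/size w]_(S : {set 'I_(size w)} | attractor w S) #|S|.

Definition min_attractor (T : eqType) (w : seq T) (S : {set 'I_(size w)}) : bool :=
  attractor w S && (#|S| == min_attr_card w).
Arguments min_attractor {T} w S.

Definition maxspan (T : eqType) (w : seq T) : nat :=
  \max_(S : {set 'I_(size w)} | min_attractor w S) span S.

Definition minspan (T : eqType) (w : seq T) : nat :=
  \big[minn/size w]_(S : {set 'I_(size w)} | min_attractor w S) span S.

Definition seq_prefix (T : Type) (s : nat -> T) (n : nat) : seq T := mkseq s n.

From mathcomp Require Import all_boot all_order zify.
From Stdlib Require Import Classical FunctionalExtensionality.
Set Implicit Arguments. Unset Strict Implicit. Unset Printing Implicit Defensive.
Import Order.TTheory.

(* Since every prefix has an attractor of size at most c, the minimum attractors of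
   s[0..n-1] have at most c positions, so "d is the largest (smallest) span of a minimum
   attractor of s[0..n-1]" is expressed by a first-order formula of (N, +, <=, s): guess the
   minimum size k <= c by a finite disjunction and quantify over k positions.  In a regular
   numeration system where s is automatic, every first-order formula defines a regular set of
   padded representations of its free variables (Buchi-Bruyere), by induction on the formula:
   products of automata for the connectives, and projection followed by the subset
   construction for the quantifiers. *)

(** * Closure properties of regular languages *)

Fixpoint strip (A : eqType) (a : A) (w : seq A) :=
  if w is b :: w' then (if b == a then strip a w' else w) else [::].

Lemma strip_nseq (A : eqType) (a : A) j (w : seq A) :
  ohead w != Some a -> strip a (nseq j a ++ w) = w.
Proof.
elim: j => [|j IHj] /=; last by rewrite eqxx.
by case: w => //= b w; case: (b =P a) => [->|//]; rewrite eqxx.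
Qed.

Section RegularClosure.
Variable A : finType.
Implicit Types (L : seq A -> Prop) (w : seq A).

Lemma regular_ext L L' : (forall w, L w <-> L' w) -> regular L -> regular L'.
Proof.
by move=> LL' [Q [q0 [d [F accF]]]]; exists Q, q0, d, F => w; rewrite -LL'.
Qed.

Lemma regular_true : regular (fun _ : seq A => True).
Proof. by exists unit, tt, (fun _ _ => tt), setT => w; rewrite inE. Qed.

Lemma regular_not L : regular L -> regular (fun w => ~ L w).
Proof.
move=> [Q [q0 [d [F accF]]]]; exists Q, q0, d, (~: F) => w.
by rewrite inE -accF; split=> /negP.
Qed.

Lemma regular_and L1 L2 : regular L1 -> regular L2 -> regular (fun w => L1 w /\ L2 w).
Proof.
move=> [Q1 [q1 [d1 [F1 acc1]]]] [Q2 [q2 [d2 [F2 acc2]]]].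
pose d (q : Q1 * Q2) a := (d1 q.1 a, d2 q.2 a).
exists (Q1 * Q2)%type, (q1, q2), d, [set q | (q.1 \in F1) && (q.2 \in F2)] => w.
have -> : foldl d (q1, q2) w = (foldl d1 q1 w, foldl d2 q2 w).
  by elim: w (q1) (q2) => //= a w IHw p1 p2; rewrite IHw.
by rewrite inE -acc1 -acc2; split=> [/andP[]|[-> ->]].
Qed.

Lemma regular_forall (I : finType) (L : I -> seq A -> Prop) :
  (forall i, regular (L i)) -> regular (fun w => forall i, L i w).
Proof.
move=> regL; suff reg_in (r : seq I) : regular (fun w => forall i, i \in r -> L i w).
  by apply: regular_ext (reg_in (enum I)) => w; split=> Lw i; [apply: Lw; rewrite mem_enum|].
elim: r => [|i r IHr]; first by apply: regular_ext regular_true.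
apply: regular_ext (regular_and (regL i) IHr) => w; split.
  by case=> Liw Lrw j /predU1P[->|]; [|apply: Lrw].
by move=> Lw; split=> [|j jr]; apply: Lw; rewrite inE ?eqxx ?jr ?orbT.
Qed.

Lemma regular_strip (a : A) L : regular L -> regular (fun w => L (strip a w)).
Proof.
move=> [Q [q0 [d [F accF]]]].
pose d' (x : option Q) b := if x is Some q then Some (d q b)
                            else if b == a then None else Some (d q0 b).
exists (option Q), None, d', [set x | if x is Some q then q \in F else q0 \in F] => w.
have run_some q u : foldl d' (Some q) u = Some (foldl d q u).
  by elim: u q => //= b u IHu q; rewrite IHu.
rewrite -accF inE; elim: w => //= b w IHw.
by case: eqP => _ //; rewrite run_some.
Qed.

Lemma regular_ohead_neq (a : A) : regular (fun w => ohead w != Some a).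
Proof.
pose d (x : option bool) b := if x is Some c then Some c else Some (b != a).
exists (option bool), None, d, [set None; Some true] => w.
have run_some c u : foldl d (Some c) u = Some c by elim: u.
by rewrite !inE; case: w => //= b w; rewrite run_some (inj_eq (@Some_inj _)); case: (b != a).
Qed.

End RegularClosure.

Lemma regular_preim (A B : finType) (h : B -> A) (L : seq A -> Prop) :
  regular L -> regular (fun w => L (map h w)).
Proof.
move=> [Q [q0 [d [F accF]]]]; exists Q, q0, (fun q b => d q (h b)), F => w.
by rewrite -accF; elim: w (q0) => //= b w IHw q; rewrite IHw.
Qed.

Section SubsetConstruction.
Variables (A B Q : finType) (d : Q -> A -> Q) (h : A -> B).

Definition image_step (X : {set Q}) (b : B) : {set Q} :=
  [set d q a | q in X, a in [pred a | h a == b]].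

Lemma foldl_image_stepP (X : {set Q}) v q' :
  reflect (exists q w, [/\ q \in X, map h w = v & foldl d q w = q'])
          (q' \in foldl image_step X v).
Proof.
apply: (iffP idP).
  elim: v X => [|b v IHv] X /=; first by move=> Xq'; exists q', [::].
  case/IHv=> _ [w [/imset2P[q a Xq /eqP hab ->] <- <-]].
  by exists q, (a :: w); rewrite /= hab.
case=> q [w [Xq <- <-]]; elim: w q X Xq => //= a w IHw q X Xq.
by apply: IHw; apply/imset2P; exists q a; rewrite ?inE.
Qed.

Lemma regular_nfa (X F : {set Q}) (L : seq B -> Prop) :
  (forall v, L v <-> exists q w, [/\ q \in X, map h w = v & foldl d q w \in F]) ->
  regular L.
Proof.
move=> defL; exists {set Q}, X, image_step, [set Y : {set Q} | [exists q in Y, q \in F]] => v.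
rewrite defL inE; split.
  by case/existsP=> q' /andP[/foldl_image_stepP[q [w [Xq hw <-]]] Fq']; exists q, w.
case=> q [w [Xq hw Fqw]]; apply/existsP; exists (foldl d q w); rewrite Fqw andbT.
by apply/foldl_image_stepP; exists q, w.
Qed.

End SubsetConstruction.

Lemma regular_map (A B : finType) (h : A -> B) (L : seq A -> Prop) :
  regular L -> regular (fun v => exists2 w, L w & v = map h w).
Proof.
move=> [Q [q0 [d [F accF]]]]; apply: (@regular_nfa _ _ _ d h [set q0] F) => v.
split=> [[w /accF Lw ->]|[q [w [/set1P-> <- /accF Lw]]]]; last by exists w.
by exists q0, w; rewrite set11.
Qed.

Lemma foldl_nseq (A Q : Type) (d : Q -> A -> Q) a j q :
  foldl d q (nseq j a) = iter j (d^~ a) q.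
Proof. by elim: j q => //= j IHj q; rewrite IHj -iterSr. Qed.

Lemma regular_lquot_nseq (A : finType) (a : A) (L : seq A -> Prop) :
  regular L -> regular (fun w => exists j, L (nseq j a ++ w)).
Proof.
move=> [Q [q0 [d [F accF]]]].
apply: (@regular_nfa _ _ _ d id [set q | fconnect (d^~ a) q0 q] F) => w.
split=> [[j /accF]|[q [u [+ + Fq]]]].
  rewrite foldl_cat foldl_nseq => Fw.
  by exists (iter j (d^~ a) q0), w; rewrite inE fconnect_iter map_id.
rewrite inE map_id => /iter_findex q0q <-; exists (findex (d^~ a) q0 q).
by apply/accF; rewrite foldl_cat foldl_nseq q0q.
Qed.

(** * Words encoding tuples of numbers *)

Lemma size_lpad (T : Type) (x : T) m u : size u <= m -> size (lpad x m u) = m.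
Proof. by rewrite /lpad size_cat size_nseq => /subnK. Qed.

Lemma pmap_lpad (T : Type) m (u : seq T) : pmap id (lpad None m (map Some u)) = u.
Proof. by rewrite /lpad pmap_cat; elim: (m - _) => //=; elim: u => //= a u ->. Qed.

Fixpoint padded (T : Type) (c : seq (option T)) : bool :=
  if c is o :: c' then (if o is Some _ then all isSome c' else padded c') else true.

Lemma padded_lpad (T : Type) m (u : seq T) : padded (lpad None m (map Some u)).
Proof. by rewrite /lpad; elim: (m - _) => //=; case: u => //= a u; elim: u. Qed.

Lemma paddedE (T : Type) (c : seq (option T)) :
  padded c -> c = lpad None (size c) (map Some (pmap id c)).
Proof.
have all_Some (u : seq (option T)) : all isSome u -> u = map Some (pmap id u).
  by elim: u => //= -[a|] u IHu //= /IHu {1}->.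
rewrite /lpad size_map; elim: c => //= -[a|] c IHc /=.
  move=> /all_Some c_Some; rewrite -c_Some.
  by rewrite {2}c_Some size_map subSS subnn.
by move=> /IHc {1}->; rewrite subSn // size_pmap count_size.
Qed.

Lemma regular_padded (T : finType) : regular (@padded T).
Proof.
pose d (x : option bool) (o : option T) : option bool :=
  match x, o with
  | Some true, None => Some true
  | Some _, Some _ => Some false
  | _, _ => None end.
exists (option bool), (Some true), d, [set Some true; Some false] => c.
have run_None u : foldl d None u = None by elim: u.
have run_false u : foldl d (Some false) u = if all isSome u then Some false else None.
  by elim: u => //= -[a|] u.
rewrite !inE; elim: c => //= -[a|] c IHc //=.
by rewrite run_false; case: all.
Qed.

Lemma regular_pmap (T : finType) (L : seq T -> Prop) :
  regular L -> regular (fun c : seq (option T) => L (pmap id c)).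
Proof.
move=> [Q [q0 [d [F accF]]]].
exists Q, q0, (fun q (o : option T) => if o is Some x then d q x else q), F => c.
by rewrite -accF; elim: c (q0) => //= -[x|] c IHc q /=; rewrite IHc.
Qed.

Section Encoding.
Variables (Sigma : finType) (rep : nat -> seq Sigma).

(* The first k variables of an environment e are read in parallel: track i of [enc k e]
   carries rep (e i), left-padded with None to the common length. *)
Definition letter k := {ffun 'I_k -> option Sigma}.
Definition blank k : letter k := [ffun => None].
Definition track k (i : 'I_k) (w : seq (letter k)) := map (fun a : letter k => a i) w.
Definition enc_size k (e : nat -> nat) := \max_(i < k) size (rep (e i)).
Definition enc k (e : nat -> nat) : seq (letter k) :=
  mkseq (fun j => [ffun i : 'I_k => nth None (lpad None (enc_size k e) (map Some (rep (e i)))) j])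
        (enc_size k e).

Lemma size_enc k e : size (enc k e) = enc_size k e.
Proof. exact: size_mkseq. Qed.

Lemma size_rep_le_enc_size k (e : nat -> nat) (i : 'I_k) : size (rep (e i)) <= enc_size k e.
Proof. exact: (@leq_bigmax _ (fun i : 'I_k => size (rep (e i)))). Qed.

Lemma track_enc k e i : track i (enc k e) = lpad None (enc_size k e) (map Some (rep (e i))).
Proof.
have size_lp : size (lpad None (enc_size k e) (map Some (rep (e i)))) = enc_size k e.
  by rewrite size_lpad // size_map size_rep_le_enc_size.
apply: (eq_from_nth (x0 := None)); first by rewrite size_map size_enc size_lp.
move=> j; rewrite size_map size_enc => lt_j.
by rewrite (nth_map (blank k)) ?size_enc // nth_mkseq // ffunE.
Qed.

Lemma eq_from_track k (w1 w2 : seq (letter k)) :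
  size w1 = size w2 -> (forall i, track i w1 = track i w2) -> w1 = w2.
Proof.
move=> eq_size eq_track; apply: (eq_from_nth (x0 := blank k)) => // j lt_j.
apply/ffunP => i; have := congr1 (nth None ^~ j) (eq_track i).
by rewrite !(nth_map (blank k)) -?eq_size.
Qed.

Lemma eq_enc k e e' : (forall i, i < k -> e i = e' i) -> enc k e = enc k e'.
Proof.
move=> ee'; have eq_size : enc_size k e = enc_size k e'.
  by apply: eq_bigr => i _; rewrite ee'.
apply: eq_from_track => [|i]; first by rewrite !size_enc.
by rewrite !track_enc eq_size ee'.
Qed.

Lemma enc_inj k e e' :
  injective rep -> enc k e = enc k e' -> forall i, i < k -> e i = e' i.
Proof.
move=> rep_inj ee' i lt_ik; apply: rep_inj.
have := congr1 (fun w => pmap id (track (Ordinal lt_ik) w)) ee'.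
by rewrite /= !track_enc !pmap_lpad.
Qed.

Lemma enc_head_nonblank k e : ohead (enc k e) != Some (blank k).
Proof.
rewrite /enc; case def_m: (enc_size k e) => [|m] //=.
have k_gt0 : 0 < #|'I_k|.
  by case: k e def_m => [|k] e; rewrite ?card_ord // /enc_size big_ord0.
have [i _ max_i] := eq_bigmax_cond (fun i : 'I_k => size (rep (e i))) k_gt0.
apply/eqP => -[/ffunP/(_ i)]; rewrite !ffunE.
move: max_i; rewrite -/(enc_size k e) def_m /lpad size_map.
by case: (rep (e i)) => //= x u [<-]; rewrite subnn.
Qed.

Definition relabel k k' (tau : 'I_k -> 'I_k') (a : letter k') : letter k := [ffun i => a (tau i)].

Lemma map_relabel_enc k k' (tau : 'I_k -> 'I_k') (sigma : nat -> nat) e :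
  (forall i, tau i = sigma i :> nat) ->
  map (relabel tau) (enc k' e) =
  nseq (enc_size k' e - enc_size k (e \o sigma)) (blank k) ++ enc k (e \o sigma).
Proof.
move=> tau_sigma.
have size_le (i : 'I_k) : size (rep ((e \o sigma) i)) <= enc_size k' e.
  by rewrite /= -tau_sigma size_rep_le_enc_size.
have le_size : enc_size k (e \o sigma) <= enc_size k' e by apply/bigmax_leqP.
apply: eq_from_track => [|i].
  by rewrite size_map size_cat size_nseq !size_enc subnK.
rewrite /track map_cat map_nseq ffunE -map_comp.
rewrite (eq_map (g := fun a : letter k' => a (tau i))); last by move=> a /=; rewrite ffunE.
rewrite -/(track _ _) -/(track _ _) !track_enc /lpad catA -nseqD size_map /= -tau_sigma.
have le_i : size (rep (e (tau i))) <= enc_size k (e \o sigma).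
  by have := size_rep_le_enc_size (e \o sigma) i; rewrite /= -tau_sigma.
by congr (nseq _ _ ++ _); rewrite size_map; lia.
Qed.

Definition is_enc k (w : seq (letter k)) := exists e, w = enc k e.

Lemma is_encP k (w : seq (letter k)) :
  is_enc w <-> (forall i, padded (track i w) /\ exists n, pmap id (track i w) = rep n)
               /\ ohead w != Some (blank k).
Proof.
split=> [[e ->]|[tracks_rep head_w]].
  split=> [i|]; last exact: enc_head_nonblank.
  by rewrite track_enc padded_lpad pmap_lpad; split=> //; exists (e i).
have [f rep_f] := fin_all_exists (fun i => proj2 (tracks_rep i)).
pose e v := if insub v is Some i then f i else 0.
have e_f (i : 'I_k) : e i = f i by rewrite /e valK.
have track_w i : track i w = lpad None (size w) (map Some (rep (e i))).
  by rewrite e_f -rep_f -{1}(size_map (fun a : letter k => a i) w) -paddedE; case: (tracks_rep i).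
have size_rep (i : 'I_k) : size (rep (e i)) <= size w.
  by have := congr1 size (track_w i); rewrite size_map /lpad size_cat size_map; lia.
have size_w : enc_size k e = size w.
  apply/eqP; rewrite eqn_leq; apply/andP; split; first by apply/bigmax_leqP.
  case: w head_w track_w {tracks_rep rep_f size_rep} => [|a w] //= a_nonblank track_w.
  have [i ai] : exists i, a i != None.
    apply/existsP; apply: contraR a_nonblank; rewrite negb_exists => /forallP a_None.
    by apply/eqP; congr Some; apply/ffunP => i; rewrite ffunE; apply/eqP/negPn.
  apply: leq_trans (size_rep_le_enc_size e i); rewrite leqNgt; apply: contra ai => lt_rep.
  by move: (track_w i); rewrite /lpad size_map subSn // => -[->].
exists e; apply: eq_from_track => [|i]; first by rewrite size_enc size_w.
by rewrite track_enc track_w size_w.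
Qed.

Lemma regular_is_enc k :
  regular (fun u : seq Sigma => exists n, u = rep n) -> regular (@is_enc k).
Proof.
move=> regular_rep; apply: (regular_ext (fun w => iff_sym (is_encP w))).
apply: regular_and; last exact: regular_ohead_neq.
pose track_ok (c : seq (option Sigma)) := padded c /\ exists n, pmap id c = rep n.
apply: (@regular_forall _ _ (fun i w => track_ok (track i w))) => i.
apply: (@regular_preim _ _ (fun a : letter k => a i) track_ok).
exact: regular_and (regular_padded _) (regular_pmap regular_rep).
Qed.

End Encoding.

(** * First-order definability *)

Definition upd (e : nat -> nat) (x y : nat) : nat -> nat :=
  fun v => if v == x then y else e v.

Definition depends_on_first k (P : (nat -> nat) -> Prop) :=
  forall e e', (forall i, i < k -> e i = e' i) -> P e -> P e'.

Inductive form :=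
| FAdd of nat & nat & nat
| FLe of nat & nat
| FLt of nat & nat
| FEq of nat & nat
| FSame of nat & nat
| FTrue | FFalse
| FNot of form
| FAnd of form & form
| FOr of form & form
| FImp of form & form
| FEx of nat & form
| FAll of nat & form.

Fixpoint eval (Delta : Type) (s : nat -> Delta) (f : form) (e : nat -> nat) : Prop :=
  match f with
  | FAdd x y z => e x + e y = e z
  | FLe x y => e x <= e y
  | FLt x y => e x < e y
  | FEq x y => e x = e y
  | FSame x y => s (e x) = s (e y)
  | FTrue => True
  | FFalse => False
  | FNot f => ~ eval s f e
  | FAnd f g => eval s f e /\ eval s g e
  | FOr f g => eval s f e \/ eval s g e
  | FImp f g => eval s f e -> eval s g e
  | FEx x f => exists y, eval s f (upd e x y)
  | FAll x f => forall y, eval s f (upd e x y)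
  end.

Section Buchi.
Variables (Sigma : finType) (rep : nat -> seq Sigma).
Hypotheses (rep_inj : injective rep) (regular_rep : regular (fun u => exists n, u = rep n)).

Definition enc_lang k (P : (nat -> nat) -> Prop) (w : seq (letter Sigma k)) :=
  exists2 e, w = enc rep k e & P e.
Arguments enc_lang : clear implicits.

Definition definable k P := depends_on_first k P /\ regular (enc_lang k P).

Lemma enc_langP k P e : depends_on_first k P -> enc_lang k P (enc rep k e) <-> P e.
Proof.
move=> P_k; split=> [[e' /enc_inj ee' Pe']|Pe]; last by exists e.
by apply: P_k Pe' => i lt_ik; rewrite ee'.
Qed.

Lemma definable_ext k (P Q : (nat -> nat) -> Prop) :
  (forall e, P e <-> Q e) -> definable k P -> definable k Q.
Proof.
move=> PQ [P_k regP]; split=> [e e' ee' /PQ Pe|]; first by apply/PQ; apply: P_k Pe.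
by apply: regular_ext regP => w; split=> -[e -> /PQ]; exists e.
Qed.

Lemma definable_true k : definable k (fun _ => True).
Proof.
split=> //; apply: regular_ext (regular_is_enc k regular_rep) => w.
by split=> -[e ->]; exists e.
Qed.

Lemma definable_not k P : definable k P -> definable k (fun e => ~ P e).
Proof.
move=> [P_k regP]; split=> [e e' ee' nPe Pe'|]; first by apply: nPe; apply: P_k Pe' => i /ee'.
apply: regular_ext (regular_and (regular_is_enc k regular_rep) (regular_not regP)) => w.
split=> [[[e ->]] /(enc_langP _ P_k) nPe|[e -> nPe]]; first by exists e.
by split; [exists e | move/(enc_langP _ P_k)].
Qed.

Lemma definable_and k P Q : definable k P -> definable k Q -> definable k (fun e => P e /\ Q e).
Proof.
move=> [P_k regP] [Q_k regQ].
split=> [e e' ee' [Pe Qe]|]; first by split; [apply: P_k Pe | apply: Q_k Qe].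
apply: regular_ext (regular_and regP regQ) => w.
split=> [[[e -> Pe] /(enc_langP _ Q_k) Qe]|[e -> [Pe Qe]]]; first by exists e.
by split; exists e.
Qed.

Lemma definable_or k P Q : definable k P -> definable k Q -> definable k (fun e => P e \/ Q e).
Proof.
move=> defP defQ.
apply: definable_ext (definable_not (definable_and (definable_not defP) (definable_not defQ))).
by move=> e; split=> [/not_and_or[]/NNPP|[]]; tauto.
Qed.

Lemma definable_false k : definable k (fun _ => False).
Proof. by apply: definable_ext (definable_not (definable_true k)) => e; split. Qed.

Lemma definable_exists_fin k (T : finType) (P : T -> (nat -> nat) -> Prop) :
  (forall a, definable k (P a)) -> definable k (fun e => exists a, P a e).
Proof.
move=> defP; suff def_in (r : seq T) : definable k (fun e => exists2 a, a \in r & P a e).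
  by apply: definable_ext (def_in (enum T)) => e; split=> -[a]; exists a; rewrite ?mem_enum.
elim: r => [|a r IHr]; first by apply: definable_ext (definable_false k) => e; split=> -[].
apply: definable_ext (definable_or (defP a) IHr) => e; split.
  by case=> [Pa|[b br Pb]]; [exists a; rewrite ?inE ?eqxx | exists b; rewrite // inE br orbT].
by case=> b /predU1P[->|br] Pb; [left | right; exists b].
Qed.

Lemma definable_rename k k' P (sigma : nat -> nat) :
  definable k P -> (forall i, i < k -> sigma i < k') ->
  definable k' (fun e => P (e \o sigma)).
Proof.
move=> [P_k regP] sigma_k'; split=> [e e' ee'|].
  by apply: P_k => i /sigma_k' /ee'.
pose tau (i : 'I_k) : 'I_k' := Ordinal (sigma_k' i (ltn_ord i)).
have map_enc e := @map_relabel_enc _ rep _ _ tau sigma e (fun i => erefl).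
apply: regular_ext (regular_and (regular_is_enc k' regular_rep)
   (regular_preim (relabel tau) (regular_strip (blank Sigma k) regP))) => w.
split=> [[[e ->]]|[e -> Pe]]; rewrite map_enc strip_nseq ?enc_head_nonblank //.
  by move=> /(enc_langP _ P_k) Pe; exists e.
by split; [exists e | exists (e \o sigma)].
Qed.

Lemma definable_widen k k' P : k <= k' -> definable k P -> definable k' P.
Proof.
move=> le_kk' defP.
exact: (definable_rename (sigma := id) defP (fun i lt_ik => leq_trans lt_ik le_kk')).
Qed.

(* Erasing the last track leaves leading blank letters, absorbed by the left quotient. *)
Lemma definable_exists k P :
  definable k.+1 P -> definable k (fun e => exists y, P (upd e k y)).
Proof.
move=> [P_k regP]; split=> [e e' ee' [y Py]|].
  by exists y; apply: P_k Py => i lt_ik; rewrite /upd; case: eqP => // ne_ik; apply: ee'; lia.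
pose tau (i : 'I_k) : 'I_k.+1 := widen_ord (leqnSn k) i.
have map_enc e := @map_relabel_enc _ rep _ _ tau id e (fun i => erefl).
have enc_upd e y : enc rep k (upd e k y) = enc rep k e.
  by apply: eq_enc => i lt_ik; rewrite /upd ifN //; apply/eqP; lia.
apply: regular_ext (regular_and (regular_is_enc k regular_rep)
   (regular_lquot_nseq (blank Sigma k) (regular_map (relabel tau) regP))) => w.
split=> [[[e ->] [j [_ [e' -> Pe'] je]]]|[e -> [y Py]]].
  have ee' : enc rep k e = enc rep k e'.
    by have := congr1 (strip (blank Sigma k)) je; rewrite map_enc !strip_nseq ?enc_head_nonblank.
  exists e => //; exists (e' k); apply: P_k Pe' => i lt_ik.
  by rewrite /upd; case: eqP => [->//|ne_ik]; apply/esym/(enc_inj rep_inj ee'); lia.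
split; first by exists e.
exists (enc_size rep k.+1 (upd e k y) - enc_size rep k (upd e k y)).
by exists (enc rep k.+1 (upd e k y)); [exists (upd e k y) | rewrite map_enc enc_upd].
Qed.

Lemma definable_exists_var k x P :
  definable k P -> definable (maxn k x.+1) (fun e => exists y, P (upd e x y)).
Proof.
move=> defP; set K := maxn k x.+1; pose sigma v := if v == x then K else v.
have sigma_k i : i < k -> sigma i < K.+1 by rewrite /sigma; case: eqP; lia.
have upd_sigma e y i : i < k -> upd e K y (sigma i) = upd e x y i.
  rewrite /upd /sigma => lt_ik; case: (eqVneq i x) => _; first by rewrite eqxx.
  by rewrite ifN //; apply/eqP; lia.
apply: definable_ext (definable_exists (definable_rename defP sigma_k)) => e.
by split=> -[y Py]; exists y; apply: defP.1 Py => i /(upd_sigma e y) //.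
Qed.

Lemma definable_narrow k m P : depends_on_first k P -> definable (k + m) P -> definable k P.
Proof.
move=> P_k; elim: m => [|m IHm]; first by rewrite addn0.
rewrite addnS => /definable_exists def_ex; apply: IHm; apply: definable_ext def_ex => e.
split=> [[y]|Pe]; last by exists 0; apply: P_k Pe => i lt_ik; rewrite /upd ifN //; apply/eqP; lia.
by apply: P_k => i lt_ik; rewrite /upd ifN //; apply/eqP; lia.
Qed.

Variables (Delta : finType) (s : nat -> Delta).
Hypotheses (regular_add : regular (fun t => exists x y z,
                                      t = pad3 (rep x) (rep y) (rep z) /\ z = x + y))
           (s_auto : automatic_wrt rep s).

Definition triple_letter (a : letter Sigma 3) := (a ord0, a (@Ordinal 3 1 isT), a ord_max).

Lemma triple_letter_inj : injective triple_letter.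
Proof.
move=> a b [a0 a1 a2]; apply/ffunP => -[[|[|[|//]]] lt_i].
- by rewrite (_ : Ordinal lt_i = ord0) //; apply: val_inj.
- by rewrite (_ : Ordinal lt_i = Ordinal (isT : 1 < 3)) //; apply: val_inj.
- by rewrite (_ : Ordinal lt_i = ord_max) //; apply: val_inj.
Qed.

Lemma map_triple_letter_enc e :
  map triple_letter (enc rep 3 e) = pad3 (rep (e 0)) (rep (e 1)) (rep (e 2)).
Proof.
set w := enc rep 3 e.
have -> : map triple_letter w =
          zip (zip (track ord0 w) (track (@Ordinal 3 1 isT) w)) (track ord_max w).
  by rewrite /track !zip_map.
rewrite !track_enc.
have -> : enc_size rep 3 e = maxn (size (rep (e 0))) (maxn (size (rep (e 1))) (size (rep (e 2)))).
  by rewrite /enc_size !big_ord_recl big_ord0 maxn0.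
by [].
Qed.

Lemma definable_add : definable 3 (fun e => e 0 + e 1 = e 2).
Proof.
split=> [e e' ee'|]; first by rewrite !ee'.
apply: regular_ext (regular_preim triple_letter regular_add) => w.
split=> [[x [y [z [w_xyz z_sum]]]]|[e -> sum_e]].
  exists (nth 0 [:: x; y; z]); last by rewrite /= z_sum.
  by apply: (inj_map triple_letter_inj); rewrite w_xyz map_triple_letter_enc.
by exists (e 0), (e 1), (e 2); rewrite map_triple_letter_enc sum_e.
Qed.

Lemma regular_rep_letter (a : Delta) : regular (fun u => exists2 n, u = rep n & s n = a).
Proof.
have [Q [q0 [d [out s_out]]]] := s_auto.
have reg_out : regular (fun u : seq Sigma => out (foldl d q0 u) = a).
  by exists Q, q0, d, [set q | out q == a] => u; rewrite inE; split=> /eqP.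
apply: regular_ext (regular_and regular_rep reg_out) => u.
by split=> [[[n ->]]|[n -> <-]]; [rewrite -s_out; exists n | split; [exists n | rewrite s_out]].
Qed.

Definition single_letter (a : letter Sigma 1) := a ord0.

Lemma single_letter_inj : injective single_letter.
Proof. by move=> a b ab; apply/ffunP => i; rewrite ord1. Qed.

Lemma map_single_letter_enc e : map single_letter (enc rep 1 e) = map Some (rep (e 0)).
Proof.
rewrite -[map single_letter _]/(track ord0 _) track_enc.
have -> : enc_size rep 1 e = size (rep (e 0)) by rewrite /enc_size big_ord1.
by rewrite /lpad size_map subnn.
Qed.

Lemma definable_letter (a : Delta) : definable 1 (fun e => s (e 0) = a).
Proof.
split=> [e e' ee'|]; first by rewrite ee'.
apply: regular_ext (regular_preim single_letter (regular_map Some (regular_rep_letter a))) => w.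
split=> [[_ [n -> sn] w_n]|[e -> se]].
  exists (fun _ => n) => //.
  by apply: (inj_map single_letter_inj); rewrite w_n map_single_letter_enc.
by exists (rep (e 0)); [exists (e 0) | rewrite map_single_letter_enc].
Qed.

Lemma definable_same_letter : definable 2 (fun e => s (e 0) = s (e 1)).
Proof.
have def_a (a : Delta) : definable 2 (fun e => s (e 0) = a /\ s (e 1) = a).
  apply: definable_and; first exact: (definable_widen _ (definable_letter a)).
  by apply: (definable_rename (sigma := succn) (definable_letter a)) => -[].
apply: definable_ext (definable_exists_fin def_a) => e.
by split=> [[a [-> ->]]|same]; last by exists (s (e 0)).
Qed.

Lemma definable_le : definable 2 (fun e => e 0 <= e 1).
Proof.
have sigma_3 i : i < 3 -> nth 0 [:: 0; 2; 1] i < 3 by case: i => [|[|[|]]].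
apply: definable_ext (definable_exists (definable_rename definable_add sigma_3)) => e.
rewrite /upd /=; split=> [[y <-]|le_e]; first exact: leq_addr.
by exists (e 1 - e 0); rewrite subnKC.
Qed.

Lemma definable_swap P : definable 2 P -> definable 2 (fun e => P (e \o nth 0 [:: 1; 0])).
Proof. by move=> defP; apply: definable_rename defP _ => -[|[|]]. Qed.

Lemma definable_lt : definable 2 (fun e => e 0 < e 1).
Proof.
apply: definable_ext (definable_not (definable_swap definable_le)) => e.
by rewrite /= ltnNge; split=> [/negP|/negP].
Qed.

Lemma definable_eq : definable 2 (fun e => e 0 = e 1).
Proof.
apply: definable_ext (definable_and definable_le (definable_swap definable_le)) => e.
rewrite /=; split=> [[le01 le10]|->] //.
by apply/eqP; rewrite eqn_leq le01.
Qed.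

Lemma definable_rename2 P x y :
  definable 2 P -> definable (maxn x y).+1 (fun e => P (e \o nth 0 [:: x; y])).
Proof. by move=> defP; apply: definable_rename defP _ => -[|[|]] //= _; lia. Qed.

Lemma definable_forall_var k x P :
  definable k P -> definable (maxn k x.+1) (fun e => forall y, P (upd e x y)).
Proof.
move=> /definable_not /(definable_exists_var x) /definable_not; apply: definable_ext => e.
split=> [nex y|all_P [y]]; last by apply.
by apply: NNPP => nP; apply: nex; exists y.
Qed.

Theorem definable_form f : exists K, definable K (eval s f).
Proof.
have widen2 K1 K2 P Q : definable K1 P -> definable K2 Q ->
    definable (maxn K1 K2) P /\ definable (maxn K1 K2) Q.
  move=> defP defQ; split; [apply: (definable_widen _ defP) | apply: (definable_widen _ defQ)].
  - exact: leq_maxl.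
  - exact: leq_maxr.
elim: f => [x y z|x y|x y|x y|x y| | |f [K defP]|f [K1 defP] g [K2 defQ]
           |f [K1 defP] g [K2 defQ]|f [K1 defP] g [K2 defQ]|x f [K defP]|x f [K defP]].
- exists (maxn x (maxn y z)).+1.
  by apply: (definable_rename (sigma := nth 0 [:: x; y; z]) definable_add) => -[|[|[|]]] //= _; lia.
- by eexists; exact: definable_rename2 definable_le.
- by eexists; exact: definable_rename2 definable_lt.
- by eexists; exact: definable_rename2 definable_eq.
- by eexists; exact: definable_rename2 definable_same_letter.
- by exists 0; exact: definable_true.
- by exists 0; exact: definable_false.
- by exists K; exact: definable_not.
- by have [dP dQ] := widen2 _ _ _ _ defP defQ; eexists; exact: definable_and dP dQ.
- by have [dP dQ] := widen2 _ _ _ _ defP defQ; eexists; exact: definable_or dP dQ.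
- have [dP dQ] := widen2 _ _ _ _ defP defQ.
  eexists; apply: definable_ext (definable_not (definable_and dP (definable_not dQ))) => e /=.
  by split=> [nPnQ Pe|PQ [/PQ]] //; apply: NNPP => nQe; apply: nPnQ.
- by exists (maxn K x.+1); exact (definable_exists_var x defP).
- by exists (maxn K x.+1); exact (definable_forall_var x defP).
Qed.

Definition pair_letter (a : letter Sigma 2) := (a ord0, a ord_max).

Lemma map_pair_letter_enc e : map pair_letter (enc rep 2 e) = pad2 (rep (e 0)) (rep (e 1)).
Proof.
set w := enc rep 2 e.
have -> : map pair_letter w = zip (track ord0 w) (track ord_max w) by rewrite /track zip_map.
rewrite !track_enc.
have -> : enc_size rep 2 e = maxn (size (rep (e 0))) (size (rep (e 1))).
  by rewrite /enc_size !big_ord_recl big_ord0 maxn0.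
by [].
Qed.

Lemma synchronized_of_form (g : nat -> nat) f :
  (forall e, eval s f e <-> e 1 = g (e 0)) -> synchronized rep g.
Proof.
move=> f_g; have [K defK] := definable_form f.
have [_ reg_g] : definable 2 (fun e => e 1 = g (e 0)).
  apply: (@definable_narrow _ (maxn K 2 - 2)) => [e e' ee'|]; first by rewrite !ee'.
  rewrite subnKC ?leq_maxr //; apply: definable_ext f_g _.
  exact: definable_widen (leq_maxl _ _) defK.
apply: regular_ext (regular_map pair_letter reg_g) => v; split=> [[_ [e -> ge] ->]|[n ->]].
  by exists (e 0); rewrite map_pair_letter_enc ge.
pose e := nth 0 [:: n; g n].
by exists (enc rep 2 e); [exists e | rewrite map_pair_letter_enc].
Qed.

End Buchi.

(** * Minimum string attractors of prefixes *)

Lemma bigmax_eqP (I : finType) (P : pred I) (F : I -> nat) d : (exists i, P i) ->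
  \max_(i | P i) F i = d <-> (exists2 i, P i & F i = d) /\ (forall i, P i -> F i <= d).
Proof.
case=> i0 Pi0; split=> [<-|[[i Pi <-] le_F]]; last first.
  by apply/eqP; rewrite eqn_leq (leq_bigmax_cond _ Pi) andbT; apply/bigmax_leqP.
split=> [|i Pi]; last exact: leq_bigmax_cond.
have P_gt0 : 0 < #|P| by apply/card_gt0P; exists i0.
by have [i Pi ->] := eq_bigmax_cond F P_gt0; exists i.
Qed.

Lemma bigmin_eqP (I : finType) (P : pred I) (F : I -> nat) x0 d :
  (exists i, P i) -> (forall i, P i -> F i <= x0) ->
  \big[minn/x0]_(i | P i) F i = d <-> (exists2 i, P i & F i = d) /\ (forall i, P i -> d <= F i).
Proof.
case=> i0 Pi0 le_x0; split=> [<-|[[i Pi <-] le_F]].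
  split=> [|i Pi]; last exact: (@bigmin_le_cond _ nat).
  by have [i Pi ->] := @eq_bigmin _ nat _ _ _ _ _ Pi0 le_x0; exists i.
apply/eqP; rewrite eqn_leq; apply/andP; split; first exact: (@bigmin_le_cond _ nat).
by apply/(@bigmin_geP _ nat); split=> //; apply: le_x0.
Qed.

Lemma mkseq_eqP (T : Type) (f g : nat -> T) a b :
  mkseq f a = mkseq g b <-> a = b /\ forall t, t < a -> f t = g t.
Proof.
split=> [fg|[<- fg]]; last first.
  by apply: (eq_from_nth (x0 := f 0)); rewrite !size_mkseq // => t lt_t; rewrite !nth_mkseq ?fg.
have ab : a = b by have := congr1 size fg; rewrite !size_mkseq.
split=> // t lt_t; have := congr1 (nth (f 0) ^~ t) fg.
by rewrite !nth_mkseq // -ab.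
Qed.

Lemma attractor_setT (T : eqType) (w : seq T) : attractor w setT.
Proof.
apply/forallP => p; apply/forallP => q; apply/implyP => le_pq.
apply/existsP; exists p; apply/existsP; exists q; rewrite le_pq eqxx /=.
by apply/existsP; exists p; rewrite inE leqnn le_pq.
Qed.

Lemma min_attr_card_le (T : eqType) (w : seq T) S : attractor w S -> min_attr_card w <= #|S|.
Proof. exact: (@bigmin_le_cond _ nat). Qed.

Lemma exists_min_attractor (T : eqType) (w : seq T) : exists S, min_attractor w S.
Proof.
have le_card (S : {set 'I_(size w)}) : attractor w S -> #|S| <= size w.
  by move=> _; rewrite -[X in _ <= X]card_ord max_card.
have [S attS min_S] := @eq_bigmin _ nat _ _ _ _ _ (attractor_setT w) le_card.
by exists S; apply/andP; split; [exact: attS | apply/eqP; exact: esym min_S].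
Qed.

Lemma span_le m (S : {set 'I_m}) : span S <= m.
Proof.
apply: leq_trans (leq_subr _ _) _; apply/bigmax_leqP => i _; exact: ltnW (ltn_ord i).
Qed.

(* [max xs - min xs = d], with witnessed extremes so that it is first-order expressible. *)
Definition spans (xs : seq nat) d :=
  (xs = [::] /\ d = 0) \/
  exists a b, [/\ a \in xs, b \in xs, {in xs, forall x, b <= x <= a} & a = b + d].

Lemma spanP m (S : {set 'I_m}) d : span S = d <-> spans [seq val i | i <- enum S] d.
Proof.
have [->|[i0 Si0]] := set_0Vmem S.
  rewrite enum_set0 /span !big_set0 sub0n.
  by split=> [<-|[[_ <-]|[a [b []]]]] //; left.
have [a Sa max_a] := @eq_bigmax _ nat _ 0 _ _ (fun i : 'I_m => val i) Si0 (fun _ _ => leq0n _).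
have [b Sb min_b] :=
  @eq_bigmin _ nat _ m _ _ (fun i : 'I_m => val i) Si0 (fun i _ => ltnW (ltn_ord i)).
have bounds : {in [seq val i | i <- enum S], forall x, val b <= x <= val a}.
  move=> x /mapP[i]; rewrite mem_enum => Si ->.
  apply/andP; split; rewrite -?max_a -?min_b.
  - exact: (@bigmin_le_cond _ nat _ _ _ _ _ Si).
  - exact: (@le_bigmax_cond _ nat _ _ _ _ _ Si).
have mem_xs i : i \in S -> val i \in [seq val i | i <- enum S].
  by move=> Si; rewrite map_f ?mem_enum.
rewrite /span max_a min_b; split=> [<-|[[xs0 _] | [a' [b' [a'_xs b'_xs bounds' a'_eq]]]]].
- right; exists (val a), (val b); split; rewrite ?mem_xs // subnKC //.
  by case/andP: (bounds _ (mem_xs _ Sa)).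
- by have := mem_xs _ Sa; rewrite xs0.
- have /andP[le_ba' le_a'a] := bounds _ a'_xs; have /andP[le_bb' le_b'a] := bounds _ b'_xs.
  have /andP[_ le_aa'] := bounds' _ (mem_xs _ Sa); have /andP[le_b'b _] := bounds' _ (mem_xs _ Sb).
  move: le_ba' le_a'a le_bb' le_b'a le_aa' le_b'b; move: (val a) (val b) => A B; lia.
Qed.

Section PrefixAttractors.
Variables (Delta : finType) (s : nat -> Delta).

Definition covers n (xs : seq nat) := forall p q, p <= q -> q < n ->
  exists p' q', [/\ p' <= q', q' < n, q - p = q' - p',
     (forall t, t <= q - p -> s (p + t) = s (p' + t)) &
     exists2 x, x \in xs & p' <= x <= q'].

Lemma covers_sub n xs ys : {subset xs <= ys} -> covers n xs -> covers n ys.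
Proof.
move=> xs_ys cov_xs p q le_pq lt_qn.
have [p' [q' [le_pq' lt_q'n len_eq same [x /xs_ys ys_x le_x]]]] := cov_xs p q le_pq lt_qn.
by exists p', q'; split=> //; exists x.
Qed.

Lemma size_prefix n : size (seq_prefix s n) = n.
Proof. exact: size_mkseq. Qed.

Lemma factor_prefix n p q : p <= q -> q < n ->
  factor (seq_prefix s n) p q = mkseq (fun t => s (p + t)) (q - p).+1.
Proof.
move=> le_pq lt_qn; apply: (eq_from_nth (x0 := s 0)).
  by rewrite size_takel ?size_mkseq // size_drop size_prefix; lia.
move=> t; rewrite size_takel ?size_drop ?size_prefix; last lia.
by move=> lt_t; rewrite nth_take // nth_drop /seq_prefix !nth_mkseq //; lia.
Qed.

Lemma attractor_prefixP n (S : {set 'I_(size (seq_prefix s n))}) :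
  attractor (seq_prefix s n) S <-> covers n [seq val i | i <- enum S].
Proof.
have lt_n (i : 'I_(size (seq_prefix s n))) : i < n by rewrite -[n in _ < n]size_prefix.
have ord_n x : x < n -> x < size (seq_prefix s n) by rewrite size_prefix.
split=> [/forallP att_S p q le_pq lt_qn|cov_S].
  have lt_pn := leq_ltn_trans le_pq lt_qn.
  move/forallP: (att_S (Ordinal (ord_n p lt_pn))) => /(_ (Ordinal (ord_n q lt_qn))).
  move=> /implyP/(_ le_pq)/existsP[p' /existsP[q' /and3P[le_pq' /eqP fact_eq]]].
  case/existsP=> i /and3P[Si le_p'i le_iq'].
  move: fact_eq; rewrite !factor_prefix // => /mkseq_eqP[[len_eq] same].
  exists p', q'; split=> //; first by move=> t le_t; apply/esym/same; rewrite len_eq; lia.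
  by exists (val i); [rewrite map_f ?mem_enum | rewrite le_p'i le_iq'].
apply/forallP => p; apply/forallP => q; apply/implyP => le_pq.
have [p' [q' [le_pq' lt_q'n len_eq same [_ /mapP[i Si ->] le_i]]]] := cov_S p q le_pq (lt_n q).
apply/existsP; exists (Ordinal (ord_n p' (leq_ltn_trans le_pq' lt_q'n))).
apply/existsP; exists (Ordinal (ord_n q' lt_q'n)); rewrite /= le_pq'.
rewrite !factor_prefix ?lt_n //.
apply/and3P; split=> //; last by apply/existsP; exists i; rewrite -mem_enum Si.
apply/eqP/mkseq_eqP; split=> [|t lt_t]; first by rewrite len_eq.
by apply/esym/same; rewrite /= len_eq; lia.
Qed.

Lemma eq_spans xs ys d : xs =i ys -> spans xs d -> spans ys d.
Proof.
move=> xs_ys [[xs0 d0]|[a [b [xs_a xs_b bounds ad]]]]; last first.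
  by right; exists a, b; rewrite -!xs_ys; split=> // x; rewrite -xs_ys; apply: bounds.
left; split=> //; case: ys xs_ys => // y ys /(_ y).
by rewrite xs0 inE eqxx.
Qed.

Definition positions n (xs : seq nat) := [set i : 'I_(size (seq_prefix s n)) | val i \in xs].

Lemma val_enum_positions n xs :
  all (gtn n) xs -> [seq val i | i <- enum (positions n xs)] =i xs.
Proof.
move=> /allP lt_xs x; apply/mapP/idP=> [[i]|xs_x]; first by rewrite mem_enum inE => xs_i ->.
have lt_x : x < size (seq_prefix s n) by rewrite size_prefix; apply: lt_xs.
by exists (Ordinal lt_x); rewrite ?mem_enum ?inE.
Qed.

Lemma card_positions_le n xs : #|positions n xs| <= size xs.
Proof.
rewrite cardE -(size_map val); apply: uniq_leq_size.
  by rewrite map_inj_uniq ?enum_uniq //; exact: val_inj.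
by move=> x /mapP[i]; rewrite mem_enum inE => xs_i ->.
Qed.

Lemma card_positions n xs : all (gtn n) xs -> uniq xs -> #|positions n xs| = size xs.
Proof.
move=> lt_xs uniq_xs; rewrite cardE -(size_map val); apply: perm_size; apply: uniq_perm => //.
  by rewrite map_inj_uniq ?enum_uniq //; exact: val_inj.
exact: val_enum_positions.
Qed.

Lemma attractor_positions n xs :
  all (gtn n) xs -> covers n xs -> attractor (seq_prefix s n) (positions n xs).
Proof.
move=> lt_xs cov_xs; apply/attractor_prefixP; apply: covers_sub cov_xs => x.
by rewrite val_enum_positions.
Qed.

Lemma prefix_positions n (S : {set 'I_(size (seq_prefix s n))}) :
  [/\ size [seq val i | i <- enum S] = #|S|, uniq [seq val i | i <- enum S]
    & all (gtn n) [seq val i | i <- enum S]].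
Proof.
split; first by rewrite size_map cardE.
  by rewrite map_inj_uniq ?enum_uniq //; exact: val_inj.
by apply/allP => _ /mapP[i _ ->]; rewrite /= -[n in _ < n]size_prefix.
Qed.

Definition attractor_of_size n k :=
  exists xs, [/\ size xs = k, all (gtn n) xs & covers n xs].

Lemma min_attr_card_prefixP n k :
  min_attr_card (seq_prefix s n) = k <->
  attractor_of_size n k /\ forall j, j < k -> ~ attractor_of_size n j.
Proof.
have le_min j : attractor_of_size n j -> min_attr_card (seq_prefix s n) <= j.
  move=> [xs [<- lt_xs cov_xs]]; apply: leq_trans (card_positions_le n xs).
  exact/min_attr_card_le/attractor_positions.
have att_min : attractor_of_size n (min_attr_card (seq_prefix s n)).
  have [S /andP[/attractor_prefixP cov_S /eqP <-]] := exists_min_attractor (seq_prefix s n).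
  by have [size_S _ lt_S] := prefix_positions S; exists [seq val i | i <- enum S].
split=> [<-|[att_k min_k]]; first by split=> // j lt_j /le_min; rewrite leqNgt lt_j.
by apply/eqP; rewrite eqn_leq le_min //= leqNgt; apply/negP => /min_k; apply.
Qed.

Definition attractor_with_span n k d :=
  exists xs, [/\ size xs = k, uniq xs, all (gtn n) xs, covers n xs & spans xs d].

Lemma min_attractor_spanP n d :
  (exists2 S, min_attractor (seq_prefix s n) S & span S = d) <->
  attractor_with_span n (min_attr_card (seq_prefix s n)) d.
Proof.
split=> [[S /andP[/attractor_prefixP cov_S /eqP card_S] /spanP span_S]|].
  have [size_S uniq_S lt_S] := prefix_positions S.
  by exists [seq val i | i <- enum S]; rewrite size_S card_S.
case=> xs [size_xs uniq_xs lt_xs cov_xs span_xs]; exists (positions n xs).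
  by rewrite /min_attractor attractor_positions // card_positions // size_xs eqxx.
apply/spanP; apply: eq_spans span_xs => x; exact/esym/val_enum_positions.
Qed.

Lemma maxspan_prefixP n d :
  let M := min_attr_card (seq_prefix s n) in
  maxspan (seq_prefix s n) = d <->
  attractor_with_span n M d /\ forall d', attractor_with_span n M d' -> d' <= d.
Proof.
rewrite /maxspan bigmax_eqP; last exact: exists_min_attractor.
rewrite -min_attractor_spanP; split=> [[span_d max_d]|[span_d max_d]]; split=> //.
  by move=> d' /min_attractor_spanP[S min_S <-]; apply: max_d.
by move=> S min_S; apply: max_d; apply/min_attractor_spanP; exists S.
Qed.

Lemma minspan_prefixP n d :
  let M := min_attr_card (seq_prefix s n) in
  minspan (seq_prefix s n) = d <->
  attractor_with_span n M d /\ forall d', attractor_with_span n M d' -> d <= d'.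
Proof.
rewrite /minspan bigmin_eqP; first last.
- by move=> S _; apply: span_le.
- exact: exists_min_attractor.
rewrite -min_attractor_spanP; split=> [[span_d min_d]|[span_d min_d]]; split=> //.
  by move=> d' /min_attractor_spanP[S min_S <-]; apply: min_d.
by move=> S min_S; apply: min_d; apply/min_attractor_spanP; exists S.
Qed.

End PrefixAttractors.

(** * First-order formulas for attractors and their spans *)

Section AttractorFormulas.
Variables (Delta : finType) (s : nat -> Delta).
Local Notation eval := (eval s).

(* Variable conventions: 0 holds n (the prefix length), 1 and 2 hold spans, 3-9 are
   scratch variables, and [pos j] holds the j-th position of a candidate attractor. *)
Definition pos j := 10 + j.

Definition with_positions (e : nat -> nat) (xs : seq nat) : nat -> nat :=
  fun v => if (10 <= v) && (v - 10 < size xs) then nth 0 xs (v - 10) else e v.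

Fixpoint ex_positions k f := if k is k'.+1 then FEx (pos k') (ex_positions k' f) else f.
Definition big_and fs := foldr FAnd FTrue fs.
Definition big_or fs := foldr FOr FFalse fs.

Lemma with_positions_pos e xs j : j < size xs -> with_positions e xs (pos j) = nth 0 xs j.
Proof. by move=> lt_j; rewrite /with_positions /pos leq_addr /= addKn lt_j. Qed.

Lemma upd_pos e x y j : x < 10 -> upd e x y (pos j) = e (pos j).
Proof. by move=> lt_x; rewrite /upd /pos ifN //; apply/eqP; lia. Qed.

Lemma eval_big_and (F : nat -> form) r e :
  eval (big_and (map F r)) e <-> {in r, forall x, eval (F x) e}.
Proof.
elim: r => [|a r IHr] /=; first by split.
rewrite IHr; split=> [[Fa Fr] x /predU1P[->|/Fr]|Fr] //.
by split=> [|x r_x]; apply: Fr; rewrite inE ?eqxx ?r_x ?orbT.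
Qed.

Lemma eval_big_or (F : nat -> form) r e :
  eval (big_or (map F r)) e <-> exists2 x, x \in r & eval (F x) e.
Proof.
elim: r => [|a r IHr] /=; first by split=> // -[].
rewrite IHr; split=> [[Fa|[x r_x Fx]]|[x /predU1P[->|r_x] Fx]].
- by exists a; rewrite ?inE ?eqxx.
- by exists x; rewrite // inE r_x orbT.
- by left.
- by right; exists x.
Qed.

Lemma eval_ex_positions k f e :
  eval (ex_positions k f) e <-> exists xs, size xs = k /\ eval f (with_positions e xs).
Proof.
elim: k e => [|k IHk] e /=.
  have with_nil : with_positions e [::] = e.
    by apply: functional_extensionality => v; rewrite /with_positions andbF.
  by split=> [fe|[xs [/size0nil -> fe]]]; [exists [::]; rewrite with_nil | rewrite -with_nil].
have upd_with xs y :
    size xs = k -> with_positions (upd e (pos k) y) xs = with_positions e (rcons xs y).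
  move=> size_xs; apply: functional_extensionality => v.
  rewrite /with_positions /upd /pos size_rcons size_xs.
  case: (leqP 10 v) => le_v /=; last by rewrite ifN //; apply/eqP; lia.
  case: (ltngtP (v - 10) k) => cmp_v.
  - by rewrite ltnS ltnW // nth_rcons size_xs cmp_v.
  - by rewrite ltnS leqNgt cmp_v ifN //; apply/eqP; lia.
  - by rewrite cmp_v ltnSn nth_rcons size_xs ltnn eqxx ifT //; apply/eqP; lia.
split=> [[y /IHk[xs [size_xs fe]]]|[xs' [size_xs' fe]]].
  by exists (rcons xs y); rewrite size_rcons size_xs -upd_with.
case/lastP: xs' size_xs' fe => [//|xs y]; rewrite size_rcons => -[size_xs] fe.
by exists y; apply/IHk; exists xs; rewrite upd_with.
Qed.

Definition hit_form k := big_or (map (fun j => FAnd (FLe 5 (pos j)) (FLe (pos j) 6)) (iota 0 k)).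

Lemma eval_hit_form xs env : (forall j, j < size xs -> env (pos j) = nth 0 xs j) ->
  eval (hit_form (size xs)) env <-> exists2 x, x \in xs & env 5 <= x <= env 6.
Proof.
move=> env_xs; rewrite eval_big_or; split=> [[j]|[x xs_x /andP[le5 le6]]].
  rewrite mem_iota add0n => lt_j [le5 le6].
  by exists (nth 0 xs j); [exact: mem_nth | rewrite -env_xs // le5 le6].
exists (index x xs); first by rewrite mem_iota add0n index_mem.
by rewrite /= env_xs ?index_mem // nth_index.
Qed.

(* With 3, 4 := p, q and 5, 6 := p', q' and 8 = 3 + 7, 9 = 5 + 7, this spells out [covers]. *)
Definition covers_form k :=
  FAll 3 (FAll 4 (FImp (FAnd (FLe 3 4) (FLt 4 0))
   (FEx 5 (FEx 6 (FAnd (FLe 5 6) (FAnd (FLt 6 0)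
     (FAnd (FEx 7 (FAnd (FAdd 3 7 4) (FAdd 5 7 6)))
     (FAnd (FAll 7 (FAll 8 (FAll 9
             (FImp (FAnd (FAdd 3 7 8) (FAnd (FAdd 5 7 9) (FLe 8 4))) (FSame 8 9)))))
           (hit_form k))))))))).

Lemma eval_covers_form e xs :
  eval (covers_form (size xs)) (with_positions e xs) <-> covers s (e 0) xs.
Proof.
set env := with_positions e xs.
have env_xs p q p' q' j : j < size xs ->
    upd (upd (upd (upd env 3 p) 4 q) 5 p') 6 q' (pos j) = nth 0 xs j.
  by move=> lt_j; rewrite !upd_pos // /env with_positions_pos.
rewrite /covers_form /=; split=> [cov p q le_pq lt_qn|cov p q].
  have [|p' [q' [le_pq' [lt_q'n [[t [tp tq]] [same hit]]]]]] := cov p q; first by rewrite /upd /=.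
  move/(eval_hit_form (env_xs p q p' q')): hit.
  rewrite /upd /= in le_pq' lt_q'n tp tq same * => hit.
  exists p', q'; split=> //; first lia.
  by move=> t' le_t'; apply: same; split=> //; lia.
rewrite /upd /= => -[le_pq lt_qn].
have [p' [q' [le_pq' lt_q'n len_eq same hit]]] := cov p q le_pq lt_qn.
exists p', q'; rewrite /upd /=; do 3 (split=> //); first by exists (q - p); lia.
split; first by move=> t u v [<- [<- le_u]]; apply: same; lia.
by apply/(eval_hit_form (env_xs p q p' q')); rewrite /upd /=.
Qed.

Definition below_form k := big_and (map (fun j => FLt (pos j) 0) (iota 0 k)).

Lemma eval_below_form e xs :
  eval (below_form (size xs)) (with_positions e xs) <-> all (gtn (e 0)) xs.
Proof.
rewrite eval_big_and; split=> [lt_xs|/(all_nthP 0) lt_xs j].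
  apply/(all_nthP 0) => j lt_j; have := lt_xs j.
  by rewrite mem_iota /= with_positions_pos //; apply.
by rewrite mem_iota add0n /= => lt_j; rewrite with_positions_pos //; apply: lt_xs.
Qed.

Definition att_form k := ex_positions k (FAnd (below_form k) (covers_form k)).

Lemma eval_att_form k e : eval (att_form k) e <-> attractor_of_size s (e 0) k.
Proof.
rewrite eval_ex_positions; split=> [[xs [<- [lt_xs cov_xs]]]|[xs [<- lt_xs cov_xs]]].
  by exists xs; split=> //; [apply/eval_below_form | apply/eval_covers_form].
by exists xs; split=> //; split; [apply/eval_below_form | apply/eval_covers_form].
Qed.

Definition uniq_form k := big_and (map (fun i => big_and (map (fun j =>
   if i < j then FNot (FEq (pos i) (pos j)) else FTrue) (iota 0 k))) (iota 0 k)).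

Lemma eval_uniq_form e xs : eval (uniq_form (size xs)) (with_positions e xs) <-> uniq xs.
Proof.
rewrite eval_big_and; split=> [neq|/(uniqP 0) uniq_xs i].
  apply/(uniqP 0) => i j; rewrite !inE => lt_i lt_j eq_ij.
  wlog lt_ij : i j lt_i lt_j eq_ij / i < j.
    by move=> wlog_ij; case: (ltngtP i j) => // [/wlog_ij|/wlog_ij /esym]; apply.
  have := neq i; rewrite mem_iota add0n => /(_ lt_i) /eval_big_and /(_ j).
  by rewrite mem_iota add0n lt_ij /= !with_positions_pos // => /(_ lt_j) /(_ eq_ij).
rewrite mem_iota add0n => lt_i; apply/eval_big_and => j; rewrite mem_iota add0n => lt_j.
case: ifP => //= lt_ij; rewrite !with_positions_pos // => eq_ij.
by have := uniq_xs i j lt_i lt_j eq_ij; lia.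
Qed.

Definition span_form k dv :=
  if k is 0 then FAdd dv dv dv else
  big_or (map (fun a => big_or (map (fun b =>
    FAnd (big_and (map (fun j => FAnd (FLe (pos b) (pos j)) (FLe (pos j) (pos a))) (iota 0 k)))
         (FAdd (pos b) dv (pos a))) (iota 0 k))) (iota 0 k)).

Lemma eval_span_form e xs dv : dv < 10 ->
  eval (span_form (size xs) dv) (with_positions e xs) <-> spans xs (e dv).
Proof.
move=> lt_dv; have env_dv : with_positions e xs dv = e dv.
  by rewrite /with_positions ifN //; apply/negP => /andP[]; lia.
case: xs env_dv => [|x0 xs'] env_dv; rewrite /spans.
  by rewrite /= env_dv; split=> [?|[[_ ->]|[? [? []]]]] //; left; split=> //; lia.
set xs := x0 :: xs' in env_dv *; rewrite -[span_form _ _]/(big_or _) eval_big_or.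
have xs_nil : xs != [::] by []; clearbody xs.
have iotaE i : (i \in iota 0 (size xs)) = (i < size xs) by rewrite mem_iota.
split=> [[a]|[[xs0 _]|[a [b [xs_a xs_b bounds ab]]]]].
- rewrite iotaE => lt_a /eval_big_or[b]; rewrite iotaE => lt_b [/eval_big_and bounds].
  rewrite /= !with_positions_pos // env_dv => ab; right.
  exists (nth 0 xs a), (nth 0 xs b); split; [exact: mem_nth | exact: mem_nth | | by rewrite ab].
  move=> x xs_x; have := bounds (index x xs); rewrite iotaE index_mem xs_x /=.
  by rewrite !with_positions_pos ?index_mem // nth_index // => /(_ isT) [-> ->].
- by rewrite xs0 in xs_nil.
exists (index a xs); first by rewrite iotaE index_mem.
apply/eval_big_or; exists (index b xs); first by rewrite iotaE index_mem.
split; last by rewrite /= !with_positions_pos ?index_mem // !nth_index // env_dv ab.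
apply/eval_big_and => j; rewrite iotaE => lt_j.
by rewrite /= !with_positions_pos ?index_mem // !nth_index //; apply/andP/bounds/mem_nth.
Qed.

Definition att_span_form k dv :=
  ex_positions k (FAnd (below_form k) (FAnd (uniq_form k) (FAnd (covers_form k) (span_form k dv)))).

Lemma eval_att_span_form k dv e : dv < 10 ->
  eval (att_span_form k dv) e <-> attractor_with_span s (e 0) k (e dv).
Proof.
move=> lt_dv; rewrite eval_ex_positions; split=> [[xs [<- [lt_xs [uniq_xs [cov_xs span_xs]]]]]|].
  exists xs; split=> //; first exact/(eval_uniq_form e).
  - exact/(eval_below_form e).
  - exact/(eval_covers_form e).
  - exact/(eval_span_form e _ lt_dv).
case=> xs [<- uniq_xs lt_xs cov_xs span_xs]; exists xs; split=> //=.
split; first exact/eval_below_form.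
split; first exact/eval_uniq_form.
by split; [apply/eval_covers_form | apply/eval_span_form].
Qed.

Definition min_card_form k :=
  FAnd (att_form k) (big_and (map (fun j => FNot (att_form j)) (iota 0 k))).

Lemma eval_min_card_form k e :
  eval (min_card_form k) e <-> min_attr_card (seq_prefix s (e 0)) = k.
Proof.
rewrite /= eval_big_and eval_att_form min_attr_card_prefixP.
split=> -[att_k min_k]; split=> // j.
  by move=> lt_jk /eval_att_form; apply: min_k; rewrite mem_iota.
by rewrite mem_iota add0n => /min_k nj /eval_att_form.
Qed.

(* Variable 1 is a span of a minimum attractor of s[0..n-1] that beats, in the sense of [opt],
   every competing span in variable 2. *)
Definition graph_form c opt :=
  big_or (map (fun k => FAnd (min_card_form k)
                             (FAnd (att_span_form k 1) (FAll 2 (FImp (att_span_form k 2) opt))))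
              (iota 0 c.+1)).

Lemma eval_graph_form c opt (R : nat -> nat -> Prop) (g : nat -> nat) e :
  (forall n, min_attr_card (seq_prefix s n) <= c) ->
  (forall y, eval opt (upd e 2 y) <-> R y (e 1)) ->
  (forall n d, g n = d <->
     let M := min_attr_card (seq_prefix s n) in
     attractor_with_span s n M d /\ forall d', attractor_with_span s n M d' -> R d' d) ->
  eval (graph_form c opt) e <-> e 1 = g (e 0).
Proof.
move=> le_c opt_R g_opt; set M := min_attr_card (seq_prefix s (e 0)).
have span_1 := eval_att_span_form _ e (isT : 1 < 10).
have span_2 d' := eval_att_span_form _ (upd e 2 d') (isT : 2 < 10).
have sym_g : e 1 = g (e 0) <-> g (e 0) = e 1 by split=> ->.
rewrite eval_big_or sym_g g_opt.
split=> [[k _ [/eval_min_card_form <- [/span_1 span_M opt_2]]]|[span_M opt_M]].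
  by split=> // d' /span_2 /opt_2 /opt_R.
exists M; first by rewrite mem_iota add0n ltnS le_c.
split; first exact/eval_min_card_form.
by split=> [|d' /span_2 span_d']; [apply/span_1 | apply/opt_R/opt_M].
Qed.

End AttractorFormulas.

Theorem theorem9 (Sigma Delta : finType) (rep : nat -> seq Sigma)
  (s : nat -> Delta) :
  regular_numeration_system rep ->
  automatic_wrt rep s ->
  (exists c : nat, forall n : nat,
     exists S : {set 'I_(size (seq_prefix s n))},
       attractor (seq_prefix s n) S && (#|S| <= c)) ->
  synchronized rep (fun n => maxspan (seq_prefix s n)) /\
  synchronized rep (fun n => minspan (seq_prefix s n)).
Proof.
case=> rep_inj regular_rep regular_add s_auto [c small_attractor].
have le_c n : min_attr_card (seq_prefix s n) <= c.
  have [S /andP[att_S le_Sc]] := small_attractor n.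
  exact: leq_trans (min_attr_card_le att_S) le_Sc.
have sync := synchronized_of_form rep_inj regular_rep regular_add s_auto.
split; [apply: (sync _ (graph_form c (FLe 2 1))) | apply: (sync _ (graph_form c (FLe 1 2)))] => e.
- exact: (eval_graph_form (R := fun d' d => d' <= d)) (maxspan_prefixP s).
- exact: (eval_graph_form (R := fun d' d => d <= d')) (minspan_prefixP s).
Qed.
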